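(* Let $X$ be an $E\mathcal M$-simplicial set, let $x\in X_n$ be co-infinitely supported, let $u_0,\dots,u_n\in\mathcal M$, let $0\le k\le n$, and let $A\subset\omega$ be co-infinite such that $(u_0,\dots,u_n).x$ is $k$-supported on $u_k(A)$. Then $x$ is $k$-supported on $A$.
   Context: $\omega=\{1,2,\dots\}$, $\mathcal M$ the monoid of injections $\omega\to\omega$, $\mathcal M_A$ the submonoid fixing $A\subset\omega$ elementwise; $A$ co-infinite if $\omega\setminus A$ is infinite. $E\mathcal M$ is the simplicial monoid with $(E\mathcal M)_n=\mathcal M^{1+n}$, pointwise multiplication, structure maps by precomposition; an $E\mathcal M$-simplicial set is a simplicial set with left $E\mathcal M$-action. $x\in X_n$ is $k$-supported on $A$ if $i_k(g).x=x$ for all $g\in\mathcal M_A$, where $i_k\colon\mathcal M\to\mathcal M^{1+n}$ is the inclusion of the $(1+k)$-th factor. $x$ is co-infinitely supported if for every $0\le k\le n$ there exists a co-infinite $A_k$ on which $x$ is $k$-supported. *)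

From mathcomp Require Import all_boot.
Set Implicit Arguments. Unset Strict Implicit. Unset Printing Implicit Defensive.

(* omega is modelled by nat (a relabelling of {1,2,...}). *)

Record injM := InjMap { imap :> nat -> nat; imap_inj : injective imap }.

Definition inj_one : injM := @InjMap id (@inj_id nat).
Lemma inj_mul_proof (g h : injM) : injective (g \o h).
Proof. by move=> a b /= /imap_inj /imap_inj. Qed.
Definition inj_mul (g h : injM) : injM := @InjMap (g \o h) (@inj_mul_proof g h).

Definition subset_nat := nat -> Prop.
Definition co_infinite (A : subset_nat) : Prop :=
  forall N : nat, exists m : nat, N <= m /\ ~ A m.
Definition image_set (u : injM) (A : subset_nat) : subset_nat :=
  fun y => exists2 a, A a & y = u a.

Definition fixes (A : subset_nat) (g : injM) : Prop := forall a, A a -> g a = a.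

Record simplex_map (m n : nat) := SMap {
  smap :> 'I_m.+1 -> 'I_n.+1;
  smap_mono : forall i j : 'I_m.+1, i <= j -> smap i <= smap j }.

Record sSet := {
  sset_obj :> nat -> Type;
  sset_map : forall m n, simplex_map m n -> sset_obj n -> sset_obj m;
  sset_id : forall n (a : simplex_map n n), (forall i, a i = i) ->
    forall x, sset_map a x = x;
  sset_comp : forall l m n (a : simplex_map l m) (b : simplex_map m n)
    (c : simplex_map l n), (forall i, c i = b (a i)) ->
    forall x, sset_map c x = sset_map a (sset_map b x)
}.

(* (EM)_n = M^{1+n}, an element is a family 'I_n.+1 -> injM;
   multiplication pointwise, face/degeneracy maps by precomposition.
   An EM-simplicial set is a simplicial set with a left EM-action. *)
Record EMsSet := {
  em_sset :> sSet;
  em_act : forall n, ('I_n.+1 -> injM) -> em_sset n -> em_sset n;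
  em_act1 : forall n (x : em_sset n), em_act (fun _ => inj_one) x = x;
  em_actM : forall n (g h : 'I_n.+1 -> injM) (x : em_sset n),
    em_act g (em_act h x) = em_act (fun i => inj_mul (g i) (h i)) x;
  em_act_nat : forall m n (a : simplex_map m n) (g : 'I_n.+1 -> injM)
    (x : em_sset n),
    sset_map a (em_act g x) = em_act (fun i => g (a i)) (sset_map a x)
}.

Definition incl_k n (k : 'I_n.+1) (g : injM) : 'I_n.+1 -> injM :=
  fun i => if i == k then g else inj_one.

Definition k_supported (X : EMsSet) n (x : X n) (k : 'I_n.+1) (A : subset_nat) :=
  forall g : injM, fixes A g -> em_act (incl_k k g) x = x.

Definition co_inf_supported (X : EMsSet) n (x : X n) :=
  forall k : 'I_n.+1, exists A : subset_nat, co_infinite A /\ k_supported x k A.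

From mathcomp Require Import all_boot boolp classical_sets functions cardinality.
Set Implicit Arguments. Unset Strict Implicit. Unset Printing Implicit Defensive.

(* For every i pick an injection w_i with w_i u_i = id on a co-infinite set B_i
   on which x is i-supported, and with w_i u_i (A) included in A; then
   w.(u.x) = x. For g fixing A, pushing i_k(g) past w turns it into i_k(g w_k)
   acting on u.x, and g w_k agrees with w_k on u_k(A). Finally, the action of
   i_k(f) on an element k-supported on a co-infinite set S only depends on the
   restriction of f to S: extend f|S to a bijection rho and write any h with
   h|S = f|S as rho t with t fixing S. Hence i_k(g).x = w.(u.x) = x. *)

Local Open Scope classical_set_scope.
Local Open Scope card_scope.

Lemma infinite_natP (B : set nat) :
  (forall N, exists m, N <= m /\ B m) <-> infinite_set B.
Proof.
split=> [unbounded /finite_seqP[s defB] | Binf N].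
  have [m [ltm Bm]] := unbounded (\max_(y <- s) y).+1.
  have sm : m \in s by move: Bm; rewrite defB.
  by move: ltm; rewrite ltnNge (leq_bigmax_seq (F := id) _ sm isT).
apply: contra_notP Binf => bounded.
apply: sub_finite_set (finite_II N) => m Bm /=.
by rewrite ltnNge; apply/negP => Nm; apply: bounded; exists m.
Qed.

Lemma co_infiniteE (A : subset_nat) : co_infinite A <-> infinite_set (~` A).
Proof. exact: infinite_natP. Qed.

Lemma infinite_set_image T U (f : T -> U) (A : set T) :
  injective f -> infinite_set A -> infinite_set (f @` A).
Proof. by move=> finj; rewrite (eq_finite_set (inj_card_eq (in2W finj))). Qed.

Lemma infinite_set_enum (A : set nat) :
  infinite_set A -> exists2 e : nat -> nat, injective e & forall m, A (e m).
Proof.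
move=> /infiniteP/pcard_leP/injfunPex[e eA einj].
by exists e => [|m]; [exact: in2TT | exact: eA].
Qed.

Lemma co_infinite_image (u : injM) (A : subset_nat) :
  co_infinite A -> co_infinite (image_set u A).
Proof.
rewrite !co_infiniteE => /(infinite_set_image (@imap_inj u)).
apply: sub_infinite_set => _ [a nAa <-] [b Ab /imap_inj ba].
by apply: nAa; rewrite ba.
Qed.

Lemma injM_ext (f g : injM) : f =1 g -> f = g.
Proof.
case: f g => f finj [g ginj] /= /funext fg; subst g.
by rewrite (Prop_irrelevance finj ginj).
Qed.

Lemma extend_to_surjection (f : injM) (S : subset_nat) : co_infinite S ->
  exists2 rho : injM, (forall s, S s -> rho s = f s) & forall y, exists z, rho z = y.
Proof.
move=> Sinf; have fSinf := co_infinite_image f Sinf.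
rewrite co_infiniteE in Sinf; rewrite co_infiniteE in fSinf.
have /card_set_bijP[phi [phiS phi_inj phi_surj]] : ~` S #= ~` image_set f S.
  rewrite (card_eq_trans (eq_card_nat (countableP _) Sinf)) //.
  by rewrite card_eq_sym eq_card_nat ?countableP.
pose rho y := if `[< S y >] then f y else phi y.
have rho_inj : injective rho.
  move=> y1 y2; rewrite /rho.
  case: (asboolP (S y1)) => S1; case: (asboolP (S y2)) => S2.
  - exact: imap_inj.
  - by move=> e; exfalso; apply: (phiS y2 S2); exists y1.
  - by move=> e; exfalso; apply: (phiS y1 S1); exists y2.
  - by move=> e; apply: phi_inj e; exact: mem_set.
exists (InjMap rho_inj) => [s Ss | y] /=; first by rewrite /rho; case: asboolP.
have [[s Ss ->] | fSy] := pselect (image_set f S y).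
  by exists s; rewrite /rho; case: asboolP.
have [z Sz <-] := phi_surj y fSy.
by exists z; rewrite /rho; case: asboolP.
Qed.

Lemma surjective_section (rho : injM) : (forall y, exists z, rho z = y) ->
  exists t : injM, cancel t rho.
Proof.
move=> /choice[t tK].
by exists (InjMap (can_inj tK)).
Qed.

Lemma factor_through (u v : injM) : co_infinite (range v) ->
  exists w : injM, forall a, w (u a) = v a.
Proof.
rewrite co_infiniteE => /infinite_set_enum[c c_inj c_range].
pose uinv := 'pinv_(fun=> 0) setT u.
have uK a : uinv (u a) = a by apply: pinvKV; [exact: in2W (@imap_inj u) | exact: in_setT].
pose w y := if `[< range u y >] then v (uinv y) else c y.
have w_inj : injective w.
  move=> y1 y2; rewrite /w.
  case: asboolP => [[a1 _ <-] | _]; case: asboolP => [[a2 _ <-] | _]; rewrite ?uK.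
  - by move/imap_inj ->.
  - by move=> e; exfalso; apply: (c_range y2); exists a1.
  - by move=> e; exfalso; apply: (c_range y1); exists a2.
  - exact: c_inj.
exists (InjMap w_inj) => a /=.
by rewrite /w; case: asboolP => [_ | []]; [rewrite uK | exists a].
Qed.

Lemma patch_injection (D : subset_nat) (e : nat -> nat) :
  injective e -> (forall m, ~ D (e m)) ->
  exists v : injM, [/\ forall a, D a -> v a = a, forall a, ~ D a -> range e (v a)
    & co_infinite (range v)].
Proof.
move=> e_inj eD.
(* only the even indices of e are used, so the odd ones witness co-infiniteness *)
pose v a := if `[< D a >] then a else e a.*2.
have v_inj : injective v.
  move=> a1 a2; rewrite /v.
  case: asboolP => D1; case: asboolP => D2 //.
  - by move=> e1; exfalso; apply: (eD a2.*2); rewrite -e1.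
  - by move=> e2; exfalso; apply: (eD a1.*2); rewrite e2.
  - by move/e_inj/double_inj.
exists (InjMap v_inj); split => [a Da | a nDa | ] /=; rewrite /v.
- by case: asboolP.
- by case: asboolP => // _; exists a.*2.
rewrite co_infiniteE.
have odd_inj : injective (fun m => e m.*2.+1) by move=> m1 m2 /e_inj [] /double_inj.
apply: sub_infinite_set (infinite_set_image odd_inj infinite_nat).
move=> _ [m _ <-] [a _]; case: asboolP => [Da eDa | _ /e_inj /(congr1 odd)].
  by apply: (eD m.*2.+1); rewrite -eDa.
by rewrite /= !odd_double.
Qed.

Lemma exists_retraction_preserving (u : injM) (B A : subset_nat) : co_infinite B ->
  exists w : injM, (forall b, B b -> w (u b) = b) /\ (forall a, A a -> A (w (u a))).
Proof.
rewrite co_infiniteE => Binf.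
have [D [e [BD e_inj eD eA]]] : exists D (e : nat -> nat),
    [/\ B `<=` D, injective e, forall m, ~ D (e m) & A `<=` D \/ range e `<=` A].
  have [ABinf | ABfin] := pselect (infinite_set (A `\` B)).
    have [e e_inj eAB] := infinite_set_enum ABinf.
    exists B, e; split=> // [m | ]; first by case: (eAB m).
    by right=> _ [m _ <-]; case: (eAB m).
  have /infinite_set_enum[e e_inj eAB] := infinite_setD Binf (contrapT ABfin).
  exists (A `|` B), e; split=> [b Bb | // | m | ]; [by right | | by left].
  by case: (eAB m) => nBe nABe [Ae | //]; apply: nABe.
have [v [vD ve vinf]] := patch_injection e_inj eD.
have [w wuv] := factor_through u vinf.
exists w; split=> [b Bb | a Aa]; rewrite wuv; first exact/vD/BD.
have [Da | nDa] := pselect (D a); first by rewrite vD.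
by case: eA => [AD | eA]; [exfalso; exact/nDa/AD | exact/eA/ve].
Qed.

Section EMAction.
Variables (X : EMsSet) (n : nat).
Implicit Types (x z : X n) (f g : 'I_n.+1 -> injM) (k : 'I_n.+1).

Lemma em_act_ext f g x : (forall i, f i =1 g i) -> em_act f x = em_act g x.
Proof. by move=> fg; congr em_act; apply: funext => i; apply: injM_ext. Qed.

Lemma em_act_incl_k1 k x : em_act (incl_k k inj_one) x = x.
Proof.
by rewrite -[RHS]em_act1; apply: em_act_ext => i a; rewrite /incl_k; case: eqP.
Qed.

Lemma em_act_incl_kM k (g h : injM) x :
  em_act (incl_k k g) (em_act (incl_k k h) x) = em_act (incl_k k (inj_mul g h)) x.
Proof. by rewrite em_actM; apply: em_act_ext => i a; rewrite /incl_k; case: eqP. Qed.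

Lemma em_act_incl_kE k (g : injM) f x :
  em_act (incl_k k g) (em_act f x) =
  em_act (fun i => if i == k then inj_one else f i)
    (em_act (incl_k k (inj_mul g (f k))) x).
Proof.
by rewrite !em_actM; apply: em_act_ext => i a; rewrite /incl_k; case: eqP => [->|].
Qed.

Lemma k_supported_act_eq z k (S : subset_nat) (f f' : injM) :
  co_infinite S -> k_supported z k S -> (forall s, S s -> f s = f' s) ->
  em_act (incl_k k f) z = em_act (incl_k k f') z.
Proof.
move=> Sinf zS ff'.
have [rho rhof rho_surj] := extend_to_surjection f Sinf.
have [t tK] := surjective_section rho_surj.
suff actE (h : injM) : (forall s, S s -> h s = rho s) ->
    em_act (incl_k k h) z = em_act (incl_k k rho) z.
  by rewrite (actE f) ?(actE f') // => s Ss; rewrite rhof // ff'.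
move=> hrho.
have th_fixes : fixes S (inj_mul t h).
  by move=> s Ss /=; apply: (@imap_inj rho); rewrite tK hrho.
rewrite -{2}(zS _ th_fixes) em_act_incl_kM; apply: em_act_ext => i a.
by rewrite /incl_k; case: eqP => //= _; rewrite tK.
Qed.

Lemma em_act_fixes_supports x (B : 'I_n.+1 -> subset_nat) f :
  (forall i, k_supported x i (B i)) -> (forall i, fixes (B i) (f i)) -> em_act f x = x.
Proof.
move=> xB fB.
pose prefix j := fun i : 'I_n.+1 => if i < j then f i else inj_one.
suff prefixE j : j <= n.+1 -> em_act (prefix j) x = x.
  by rewrite -[RHS](prefixE n.+1) //; apply: em_act_ext => i a; rewrite /prefix ltn_ord.
elim: j => [_ | j IH lt_jn]; first by rewrite -[RHS]em_act1; apply: em_act_ext.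
pose J : 'I_n.+1 := Ordinal lt_jn.
rewrite -[RHS](xB J (f J) (fB J)) -[in RHS](IH (ltnW lt_jn)) em_actM.
apply: em_act_ext => i a; rewrite /prefix /incl_k ltnS leq_eqVlt.
have [->|neq] := eqVneq i J; first by rewrite eqxx ltnn.
suff /negbTE -> : (i : nat) != j by [].
by apply: contra neq => /eqP eq_ij; apply/eqP/val_inj.
Qed.

End EMAction.

Theorem lemma2p26 (X : EMsSet) (n : nat) (x : X n)
  (hx : co_inf_supported x) (u : 'I_n.+1 -> injM) (k : 'I_n.+1)
  (A : subset_nat) (hA : co_infinite A)
  (hux : k_supported (em_act u x) k (image_set (u k) A)) :
  k_supported x k A.
Proof.
move=> g gA.
have [B /all_and2[Binf xB]] := choice hx.
have [w /all_and2[wB wA]] :=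
  choice (fun i => exists_retraction_preserving (u i) A (Binf i)).
have wux : em_act w (em_act u x) = x.
  by rewrite em_actM; apply: (em_act_fixes_supports xB) => i; exact: wB.
have gw_agree s : image_set (u k) A s -> inj_mul g (w k) s = inj_mul inj_one (w k) s.
  by case=> a Aa ->; rewrite /= gA //; apply: wA.
rewrite -{1}wux em_act_incl_kE (k_supported_act_eq (co_infinite_image _ hA) hux gw_agree).
by rewrite -em_act_incl_kE em_act_incl_k1 wux.
Qed.
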